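(* Let $A_1,A_2:\mathbb{R}^n\rightrightarrows\mathbb{R}^n$ be monotone linear relations. Then $q_{A_1}+q_{A_2}=q_{A_1+A_2}$. If in addition $\operatorname{dom}A_1\subseteq\operatorname{dom}A_2$ and $A_1-A_2$ is monotone, then $q_{A_1}-q_{A_2}=q_{A_1-A_2}$.
   Context: A linear relation is an operator whose graph is a linear subspace; monotone means $\langle x^*-y^*,x-y\rangle\ge0$ on the graph. For a monotone linear relation $B$, $q_B(x)=\frac12\langle x,Bx\rangle$ if $x\in\operatorname{dom}B$ (single-valued) and $\infty$ otherwise. $A_1\pm A_2$ are pointwise Minkowski sums/differences with $\operatorname{dom}(A_1\pm A_2)=\operatorname{dom}A_1\cap\operatorname{dom}A_2$. Convention: $\infty-t=\infty$ for real $t$. *)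

From HB Require Import structures.
From mathcomp Require Import all_boot all_order all_algebra.
From mathcomp Require Import boolp classical_sets reals constructive_ereal.
Set Implicit Arguments. Unset Strict Implicit. Unset Printing Implicit Defensive.
Import Order.TTheory GRing.Theory Num.Theory.
Local Open Scope ring_scope.

(* A set-valued operator R^n ⇉ R^n, given by its graph: B x y  <->  y ∈ B x.
   Vectors of R^n are row vectors 'rV[R]_n. *)
Definition relation (R : realType) (n : nat) := 'rV[R]_n -> 'rV[R]_n -> Prop.

Definition dotv (R : realType) (n : nat) (u v : 'rV[R]_n) : R :=
  \sum_(i < n) u ord0 i * v ord0 i.

Definition linear_relation (R : realType) (n : nat) (B : relation R n) : Prop :=
  [/\ B 0 0,
      (forall x y x' y', B x y -> B x' y' -> B (x + x') (y + y')) &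
      (forall (a : R) x y, B x y -> B (a *: x) (a *: y))].

Definition monotone_rel (R : realType) (n : nat) (B : relation R n) : Prop :=
  forall x xs y ys, B x xs -> B y ys -> 0 <= dotv (xs - ys) (x - y).

Definition dom_rel (R : realType) (n : nat) (B : relation R n) : set 'rV[R]_n :=
  [set x | exists y, B x y].

Definition rel_add (R : realType) (n : nat) (A1 A2 : relation R n) : relation R n :=
  fun x z => exists y1 y2, [/\ A1 x y1, A2 x y2 & z = y1 + y2].
Definition rel_sub (R : realType) (n : nat) (A1 A2 : relation R n) : relation R n :=
  fun x z => exists y1 y2, [/\ A1 x y1, A2 x y2 & z = y1 - y2].

(* q_B x = 1/2 <x, Bx> on dom B (for any chosen element of Bx; for monotone
   linear B this value does not depend on the choice), +oo otherwise *)
Definition qform (R : realType) (n : nat) (B : relation R n) (x : 'rV[R]_n) : \bar R :=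
  match pselect (exists y, B x y) with
  | left h => ((1/2) * dotv x (projT1 (cid h)))%:E
  | right _ => +oo%E
  end.

(* difference of extended-real-valued functions with convention oo - t = oo
   (and, when the subtrahend is infinite, the result is +oo) *)
Definition esub_conv (R : realType) (a b : \bar R) : \bar R :=
  match b with
  | EFin t => adde a (oppe t%:E)
  | _ => +oo%E
  end.

(* On a monotone linear relation B, the value <x, y> for y in B x does not
   depend on the choice of y: two choices differ by an element z of B 0, and
   monotonicity between (0, t z) and (x, y) gives t <z, x> <= <y, x> for every
   real t, which forces z to be orthogonal to dom B.  Hence q_B x can be
   computed from any element of B x, and both identities reduce to the
   bilinearity of the inner product, once the sum (resp. the difference, which
   is monotone by hypothesis) is known to be a monotone linear relation whose
   domain is dom A1 ∩ dom A2. *)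
From mathcomp Require Import all_boot all_order all_algebra.
From mathcomp Require Import boolp classical_sets reals constructive_ereal.
Import Order.TTheory GRing.Theory Num.Theory.

Local Open Scope classical_set_scope.
Local Open Scope ring_scope.

Section InnerProduct.
Context {R : realType} {n : nat}.
Implicit Types (u v w : 'rV[R]_n).

Lemma dotvC u v : dotv u v = dotv v u.
Proof. by apply: eq_bigr => i _; rewrite mulrC. Qed.

Lemma dotvDr u v w : dotv u (v + w) = dotv u v + dotv u w.
Proof.
by rewrite /dotv -big_split; apply: eq_bigr => i _; rewrite mxE mulrDr.
Qed.

Lemma dotvZr u (a : R) v : dotv u (a *: v) = a * dotv u v.
Proof.
by rewrite /dotv mulr_sumr; apply: eq_bigr => i _; rewrite mxE mulrCA.
Qed.

Lemma dotvNr u v : dotv u (- v) = - dotv u v.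
Proof. by rewrite -scaleN1r dotvZr mulN1r. Qed.

Lemma dotvBr u v w : dotv u (v - w) = dotv u v - dotv u w.
Proof. by rewrite dotvDr dotvNr. Qed.

Lemma dotvDl u v w : dotv (u + v) w = dotv u w + dotv v w.
Proof. by rewrite dotvC dotvDr !(dotvC w). Qed.

End InnerProduct.

Section LinearRelation.
Context {R : realType} {n : nat}.
Implicit Types (B : relation R n) (x y : 'rV[R]_n).

Lemma linear_relB {B x y x' y'} :
  linear_relation B -> B x y -> B x' y' -> B (x - x') (y - y').
Proof. by case=> _ BD BZ hy hy'; rewrite -!scaleN1r; apply/BD/BZ. Qed.

Lemma monotone_rel_orth_dom {B x y z} :
  linear_relation B -> monotone_rel B -> B 0 z -> B x y -> dotv z x = 0.
Proof.
move=> LB MB hz hy; have [_ _ BZ] := LB.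
have le_t t : t * dotv z x <= dotv y x.
  have := MB _ _ _ _ (BZ t _ _ hz) hy.
  by rewrite scaler0 sub0r dotvNr dotvC dotvBr dotvZr !(dotvC x) opprB subr_ge0.
apply: contra_eq (le_t ((dotv y x + 1) / dotv z x)) => nz.
by rewrite mulfVK // gerDl ler10.
Qed.

Lemma monotone_rel_dotv_eq {B x y y'} :
  linear_relation B -> monotone_rel B -> B x y -> B x y' ->
  dotv x y = dotv x y'.
Proof.
move=> LB MB hy hy'.
have hz : B 0 (y - y') by rewrite -(subrr x); exact: linear_relB.
apply/eqP; rewrite -subr_eq0 -dotvBr dotvC.
by rewrite (monotone_rel_orth_dom LB MB hz hy).
Qed.

Lemma linear_rel_add {A1 A2 : relation R n} :
  linear_relation A1 -> linear_relation A2 -> linear_relation (rel_add A1 A2).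
Proof.
move=> [A10 A1D A1Z] [A20 A2D A2Z]; split.
- by exists 0, 0; rewrite addr0.
- move=> x y x' y' [y1 [y2 [h1 h2 ->]]] [y1' [y2' [h1' h2' ->]]].
  exists (y1 + y1'), (y2 + y2').
  by split; [exact: A1D | exact: A2D | rewrite addrACA].
- move=> a x y [y1 [y2 [h1 h2 ->]]].
  exists (a *: y1), (a *: y2).
  by split; [exact: A1Z | exact: A2Z | rewrite scalerDr].
Qed.

Lemma linear_rel_sub {A1 A2 : relation R n} :
  linear_relation A1 -> linear_relation A2 -> linear_relation (rel_sub A1 A2).
Proof.
move=> [A10 A1D A1Z] [A20 A2D A2Z]; split.
- by exists 0, 0; rewrite subr0.
- move=> x y x' y' [y1 [y2 [h1 h2 ->]]] [y1' [y2' [h1' h2' ->]]].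
  exists (y1 + y1'), (y2 + y2').
  by split; [exact: A1D | exact: A2D | rewrite opprD addrACA].
- move=> a x y [y1 [y2 [h1 h2 ->]]].
  exists (a *: y1), (a *: y2).
  by split; [exact: A1Z | exact: A2Z | rewrite scalerBr].
Qed.

Lemma monotone_rel_add {A1 A2 : relation R n} :
  monotone_rel A1 -> monotone_rel A2 -> monotone_rel (rel_add A1 A2).
Proof.
move=> M1 M2 x _ y _ [y1 [y2 [h1 h2 ->]]] [w1 [w2 [k1 k2 ->]]].
rewrite opprD addrACA dotvDl.
by rewrite addr_ge0 ?(M1 _ _ _ _ h1 k1) ?(M2 _ _ _ _ h2 k2).
Qed.

Lemma dom_rel_add (A1 A2 : relation R n) :
  dom_rel (rel_add A1 A2) = dom_rel A1 `&` dom_rel A2.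
Proof.
apply/seteqP; split=> x /=.
- by move=> [_ [y1 [y2 [h1 h2 _]]]]; split; [exists y1 | exists y2].
- by move=> [[y1 h1] [y2 h2]]; exists (y1 + y2), y1, y2.
Qed.

Lemma dom_rel_sub (A1 A2 : relation R n) :
  dom_rel (rel_sub A1 A2) = dom_rel A1 `&` dom_rel A2.
Proof.
apply/seteqP; split=> x /=.
- by move=> [_ [y1 [y2 [h1 h2 _]]]]; split; [exists y1 | exists y2].
- by move=> [[y1 h1] [y2 h2]]; exists (y1 - y2), y1, y2.
Qed.

End LinearRelation.

Section QuadraticForm.
Context {R : realType} {n : nat}.
Implicit Types (B : relation R n) (x y : 'rV[R]_n).

Lemma qformE {B x y} :
  linear_relation B -> monotone_rel B -> B x y ->
  qform B x = ((1 / 2) * dotv x y)%:E.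
Proof.
move=> LB MB hy; rewrite /qform; case: pselect => [h | []]; last by exists y.
by case: (cid h) => y' hy' /=; rewrite (monotone_rel_dotv_eq LB MB hy' hy).
Qed.

Lemma qform_notin_dom B x : ~ dom_rel B x -> qform B x = +oo%E.
Proof. by rewrite /qform; case: pselect. Qed.

Lemma qform_neq_ninfty B x : qform B x != -oo%E.
Proof. by rewrite /qform; case: pselect. Qed.

Lemma esub_conv_pinfty_l (a : \bar R) : esub_conv +oo%E a = +oo%E.
Proof. by case: a. Qed.

End QuadraticForm.

Theorem proposition4p22 (R : realType) (n : nat) (A1 A2 : relation R n) :
  linear_relation A1 -> monotone_rel A1 ->
  linear_relation A2 -> monotone_rel A2 ->
  (forall x, adde (qform A1 x) (qform A2 x) = qform (rel_add A1 A2) x) /\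
  ((dom_rel A1 `<=` dom_rel A2)%classic -> monotone_rel (rel_sub A1 A2) ->
   forall x, esub_conv (qform A1 x) (qform A2 x) = qform (rel_sub A1 A2) x).
Proof.
move=> L1 M1 L2 M2; split=> [x | dom12 Msub x].
- have [[[y1 h1] [y2 h2]] | nodom] := pselect ((dom_rel A1 `&` dom_rel A2) x).
    rewrite (qformE L1 M1 h1) (qformE L2 M2 h2).
    have h : rel_add A1 A2 x (y1 + y2) by exists y1, y2.
    rewrite (qformE (linear_rel_add L1 L2) (monotone_rel_add M1 M2) h).
    by rewrite dotvDr mulrDr.
  rewrite [RHS]qform_notin_dom ?dom_rel_add //.
  have [d1 | nd1] := pselect (dom_rel A1 x).
    rewrite (qform_notin_dom A2) => [|d2]; last exact: nodom.
    exact/addey/qform_neq_ninfty.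
  by rewrite qform_notin_dom //; apply/addye/qform_neq_ninfty.
- have [[y1 h1] | nd1] := pselect (dom_rel A1 x).
    have [y2 h2] := dom12 _ (ex_intro _ y1 h1).
    rewrite (qformE L1 M1 h1) (qformE L2 M2 h2).
    have h : rel_sub A1 A2 x (y1 - y2) by exists y1, y2.
    by rewrite (qformE (linear_rel_sub L1 L2) Msub h) dotvBr mulrBr.
  rewrite (qform_notin_dom A1) // [RHS]qform_notin_dom ?esub_conv_pinfty_l //.
  by rewrite dom_rel_sub => -[].
Qed.
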